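(* For every $n\geq 3$, $$|S_n(123,132,3421)|=|S_n(123,213,3421)|=3n-5.$$
   Context: Permutations are written in one-line notation. A permutation $\sigma\in S_n$ contains $\pi\in S_m$ if there are indices $i_1<\dots<i_m$ such that for all $j<l$, $\sigma_{i_j}<\sigma_{i_l}$ iff $\pi_j<\pi_l$; otherwise $\sigma$ avoids $\pi$. $S_n(\pi^{(1)},\dots,\pi^{(r)})$ is the set of permutations in $S_n$ avoiding all the listed patterns. *)

From mathcomp Require Import all_boot all_fingroup.
Set Implicit Arguments. Unset Strict Implicit. Unset Printing Implicit Defensive.

(* A permutation sigma in S_n is {perm 'I_n}; its one-line notation is
   sigma 0, sigma 1, ..., sigma (n-1) (values 0-based).
   A pattern pi in S_m is likewise a {perm 'I_m}. *)

Definition contains (n m : nat) (sigma : {perm 'I_n}) (pi : {perm 'I_m}) : bool :=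
  [exists f : {ffun 'I_m -> 'I_n},
    [forall j : 'I_m, forall l : 'I_m,
       (j < l) ==> (f j < f l) && ((sigma (f j) < sigma (f l)) == (pi j < pi l))]].

Definition avoids (n m : nat) (sigma : {perm 'I_n}) (pi : {perm 'I_m}) : bool :=
  ~~ contains sigma pi.

(* Patterns written 1-based in one-line notation, converted to 0-based perms. *)
Definition p123 : {perm 'I_3} := 1%g.
Definition p132 : {perm 'I_3} := tperm (inord 1) (inord 2).
Definition p213 : {perm 'I_3} := tperm (inord 0) (inord 1).
Definition f3421 (i : 'I_4) : 'I_4 := inord (nth 0 [:: 2; 3; 1; 0] i).
Lemma f3421_inj : injective f3421.
Proof.
move=> [[|[|[|[|i]]]] Hi] [[|[|[|[|j]]]] Hj] // /(congr1 val);
  rewrite /f3421 /= ?inordK //; try by move=> _; apply: val_inj.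
Qed.
Definition p3421 : {perm 'I_4} := perm f3421_inj.

Definition Av3 (n : nat) (t1 t2 : {perm 'I_3}) (t3 : {perm 'I_4}) : {set {perm 'I_n}} :=
  [set s : {perm 'I_n} | [&& avoids s t1, avoids s t2 & avoids s t3]].

From mathcomp Require Import all_boot all_fingroup zify.
Set Implicit Arguments. Unset Strict Implicit. Unset Printing Implicit Defensive.

(* An entry followed by two larger entries is an occurrence of 123 or 132, so
   the first entry of a permutation avoiding 123 and 132 is its largest or
   second largest value, and deleting it leaves a shorter avoider.  After a
   first entry n+1 (the maximum) the rest is an arbitrary avoider of length n.
   After a first entry n, a 3421 appears exactly when the maximum of the rest
   is followed by an inversion.  Writing a_n for the number of avoiders and e_n
   for those whose entries after the maximum increase, this gives
   a_{n+1} = a_n + e_n, and likewise e_{n+1} = e_n + [n <= 2]: after a first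
   entry n+1 the rest must be increasing, i.e. the identity, which avoids 123
   iff n <= 2.  Hence e_n = min(n, 3) and a_n = 3n - 5 for n >= 3.  The second
   class is the image of the first under s |-> reverse-complement of s^-1,
   which fixes 123 and 3421 and maps 132 to 213. *)

Lemma perm_ltnNgt n (s : {perm 'I_n}) (i j : 'I_n) :
  i != j -> (s j < s i) = ~~ (s i < s j).
Proof. by move=> ij; rewrite ltn_neqAle -leqNgt val_eqE (inj_eq perm_inj) eq_sym ij. Qed.

Lemma ltn_rev_ord n (a b : 'I_n) : (rev_ord a < rev_ord b) = (b < a).
Proof. by have := ltn_ord a; have := ltn_ord b; rewrite /=; lia. Qed.

Section LiftOrder.
Variables (n : nat) (v : 'I_n.+1).
Implicit Types a b : 'I_n.

Lemma ltn_lift2 a b : (lift v a < lift v b) = (a < b).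
Proof. by rewrite /= ltnNge leq_bump2 -ltnNge. Qed.

Lemma ltn_lift_pivot a : (lift v a < v) = (a < v).
Proof. by rewrite /= /bump; case: leqP; lia. Qed.

Lemma ltn_pivot_lift a : (v < lift v a) = (v <= a).
Proof. by rewrite /= /bump; case: leqP; lia. Qed.

Lemma lift_eq_last a : (lift v a == n :> nat) = (a == n.-1 :> nat) && (v <= a).
Proof. by have := ltn_ord a; rewrite /= /bump; case: leqP; lia. Qed.

End LiftOrder.

Section IncreasingTuples.
Variable n : nat.

Definition exists_lt2 (Q : 'I_n -> 'I_n -> bool) :=
  [exists i : 'I_n, exists j : 'I_n, (i < j) && Q i j].
Definition exists_lt3 (Q : 'I_n -> 'I_n -> 'I_n -> bool) :=
  [exists i : 'I_n, exists j : 'I_n, exists k : 'I_n, [&& i < j, j < k & Q i j k]].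
Definition exists_lt4 (Q : 'I_n -> 'I_n -> 'I_n -> 'I_n -> bool) :=
  [exists i : 'I_n, exists j : 'I_n, exists k : 'I_n, exists l : 'I_n,
     [&& i < j, j < k, k < l & Q i j k l]].

Lemma exists_lt2P (Q : 'I_n -> 'I_n -> bool) :
  reflect (exists i j : 'I_n, i < j /\ Q i j) (exists_lt2 Q).
Proof.
apply: (iffP existsP) => [[i /existsP[j /andP[]]] | [i [j [ij q]]]]; first by exists i, j.
by exists i; apply/existsP; exists j; rewrite ij.
Qed.

Lemma exists_lt3P (Q : 'I_n -> 'I_n -> 'I_n -> bool) :
  reflect (exists i j k : 'I_n, [/\ i < j, j < k & Q i j k]) (exists_lt3 Q).
Proof.
apply: (iffP existsP) => [[i /existsP[j /existsP[k /and3P[]]]] | [i [j [k [ij jk q]]]]].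
  by exists i, j, k.
by exists i; apply/existsP; exists j; apply/existsP; exists k; rewrite ij jk.
Qed.

Lemma exists_lt4P (Q : 'I_n -> 'I_n -> 'I_n -> 'I_n -> bool) :
  reflect (exists i j k l : 'I_n, [/\ i < j, j < k, k < l & Q i j k l]) (exists_lt4 Q).
Proof.
apply: (iffP existsP) => [[i /existsP[j /existsP[k /existsP[l /and4P[]]]]] |
                          [i [j [k [l [ij jk kl q]]]]]].
  by exists i, j, k, l.
by exists i; apply/existsP; exists j; apply/existsP; exists k; apply/existsP; exists l;
  rewrite ij jk kl.
Qed.

Lemma eq_exists_lt2 (Q Q' : 'I_n -> 'I_n -> bool) :
  (forall i j : 'I_n, i < j -> Q i j = Q' i j) -> exists_lt2 Q = exists_lt2 Q'.
Proof.
move=> eqQ; apply: eq_existsb => i; apply: eq_existsb => j.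
by case: ltnP => // ij; rewrite eqQ.
Qed.

Lemma eq_exists_lt3 (Q Q' : 'I_n -> 'I_n -> 'I_n -> bool) :
    (forall i j k : 'I_n, i < j -> j < k -> Q i j k = Q' i j k) ->
  exists_lt3 Q = exists_lt3 Q'.
Proof.
move=> eqQ; do 3![apply: eq_existsb => ?].
by case: ltnP => // ij; case: ltnP => // jk; rewrite eqQ.
Qed.

Lemma eq_exists_lt4 (Q Q' : 'I_n -> 'I_n -> 'I_n -> 'I_n -> bool) :
    (forall i j k l : 'I_n, i < j -> j < k -> k < l -> Q i j k l = Q' i j k l) ->
  exists_lt4 Q = exists_lt4 Q'.
Proof.
move=> eqQ; do 4![apply: eq_existsb => ?].
by case: ltnP => // ij; case: ltnP => // jk; case: ltnP => // kl; rewrite eqQ.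
Qed.

Lemma exists_lt3_orb (Q Q' : 'I_n -> 'I_n -> 'I_n -> bool) :
  exists_lt3 Q || exists_lt3 Q' = exists_lt3 (fun i j k => Q i j k || Q' i j k).
Proof.
apply/orP/exists_lt3P => [[] /exists_lt3P[i [j [k [ij jk q]]]] | [i [j [k [ij jk /orP[]]]]]].
- by exists i, j, k; rewrite q.
- by exists i, j, k; rewrite q orbT.
- by left; apply/exists_lt3P; exists i, j, k.
- by right; apply/exists_lt3P; exists i, j, k.
Qed.

Lemma exists_lt3_small (Q : 'I_n -> 'I_n -> 'I_n -> bool) :
  n <= 2 -> exists_lt3 Q = false.
Proof. by move=> n2; apply/exists_lt3P => -[i [j [k [ij jk _]]]]; have := ltn_ord k; lia. Qed.

End IncreasingTuples.

Section SplitFirst.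
Variable n : nat.

Lemma exists_lt3_lift0 (Q : 'I_n.+1 -> 'I_n.+1 -> 'I_n.+1 -> bool) :
  exists_lt3 Q = exists_lt2 (fun j k => Q ord0 (lift ord0 j) (lift ord0 k))
                 || exists_lt3 (fun i j k => Q (lift ord0 i) (lift ord0 j) (lift ord0 k)).
Proof.
apply/exists_lt3P/orP => [[i [j [k [ij jk q]]]] | [/exists_lt2P | /exists_lt3P]].
- case: (unliftP ord0 j) ij jk q => [j'|] -> // ij.
  case: (unliftP ord0 k) => [k'|] -> // jk.
  rewrite ltn_lift2 in jk.
  case: (unliftP ord0 i) ij => [i'|] -> ij q.
    by right; apply/exists_lt3P; exists i', j', k'; rewrite -(ltn_lift2 ord0).
  by left; apply/exists_lt2P; exists j', k'.
- by case=> j [k [jk q]]; exists ord0, (lift ord0 j), (lift ord0 k); rewrite ltn_lift2.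
- case=> i [j [k [ij jk q]]].
  by exists (lift ord0 i), (lift ord0 j), (lift ord0 k); rewrite !ltn_lift2.
Qed.

Lemma exists_lt4_lift0 (Q : 'I_n.+1 -> 'I_n.+1 -> 'I_n.+1 -> 'I_n.+1 -> bool) :
  exists_lt4 Q =
    exists_lt3 (fun j k l => Q ord0 (lift ord0 j) (lift ord0 k) (lift ord0 l))
    || exists_lt4 (fun i j k l =>
                     Q (lift ord0 i) (lift ord0 j) (lift ord0 k) (lift ord0 l)).
Proof.
apply/exists_lt4P/orP => [[i [j [k [l [ij jk kl q]]]]] | [/exists_lt3P | /exists_lt4P]].
- case: (unliftP ord0 j) ij jk q => [j'|] -> // ij.
  case: (unliftP ord0 k) kl => [k'|] -> // kl jk.
  case: (unliftP ord0 l) kl => [l'|] -> // kl.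
  rewrite ltn_lift2 in jk kl.
  case: (unliftP ord0 i) ij => [i'|] -> ij q.
    by right; apply/exists_lt4P; exists i', j', k', l'; rewrite -(ltn_lift2 ord0).
  by left; apply/exists_lt3P; exists j', k', l'.
- case=> j [k [l [jk kl q]]].
  by exists ord0, (lift ord0 j), (lift ord0 k), (lift ord0 l); rewrite !ltn_lift2.
- case=> i [j [k [l [ij jk kl q]]]].
  by exists (lift ord0 i), (lift ord0 j), (lift ord0 k), (lift ord0 l); rewrite !ltn_lift2.
Qed.

End SplitFirst.

Lemma perm_incr_geq n (t : {perm 'I_n}) :
  (forall i j : 'I_n, i < j -> t i < t j) -> forall i : 'I_n, i <= t i.
Proof.
move=> t_incr [m lt_mn]; elim: m lt_mn => // m IHm lt_m1n.
have := IHm (ltnW lt_m1n).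
have := t_incr (Ordinal (ltnW lt_m1n)) (Ordinal lt_m1n) (ltnSn m).
by rewrite /=; lia.
Qed.

Lemma perm_incr_eq1 n (t : {perm 'I_n}) :
  (forall i j : 'I_n, i < j -> t i < t j) -> t = 1%g.
Proof.
move=> t_incr; have tV_incr (i j : 'I_n) : i < j -> (t^-1)%g i < (t^-1)%g j.
  move=> ij; case: ltngtP => // [/t_incr | /val_inj/perm_inj eq_ij].
    by rewrite !permKV; lia.
  by move: ij; rewrite eq_ij ltnn.
apply/permP => i; apply/val_inj; rewrite perm1 /=.
have := perm_incr_geq t_incr i; have := perm_incr_geq tV_incr (t i).
by rewrite permK; lia.
Qed.

Lemma exists_inversion n (t : {perm 'I_n}) :
  exists_lt2 (fun k l => t l < t k) = (t != 1%g).
Proof.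
apply/idP/idP => [/exists_lt2P[k [l [kl]]] | t_neq1].
  by apply: contraTneq => ->; rewrite !perm1 ltnNge ltnW.
apply: contraNT t_neq1 => no_inv; apply/eqP/perm_incr_eq1 => i j ij.
rewrite perm_ltnNgt; last by apply/eqP => ji; rewrite ji ltnn in ij.
by apply: contra no_inv => ji; apply/exists_lt2P; exists i, j.
Qed.

Lemma two_values_geq n (t : {perm 'I_n}) (v : nat) :
  exists_lt2 (fun j k => (v <= t j) && (v <= t k)) = (v < n.-1).
Proof.
apply/exists_lt2P/idP => [[j [k [jk /andP[vj vk]]]] | vn].
  have : t j != t k by rewrite (inj_eq perm_inj); apply/eqP => e; rewrite e ltnn in jk.
  by rewrite -val_eqE /=; have := ltn_ord (t j); have := ltn_ord (t k); lia.
case: n t vn => [|[|n]] t // vn.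
pose a := (t^-1)%g ord_max; pose b := (t^-1)%g (inord n).
have [ta tb] : t a = n.+1 :> nat /\ t b = n :> nat by rewrite !permKV inordK.
have vab : (v <= t a) && (v <= t b) by rewrite ta tb; lia.
case: (ltngtP a b) => [ab | ba | /val_inj eq_ab].
- by exists a, b; rewrite ab.
- by exists b, a; rewrite ba andbC.
- by move: ta; rewrite eq_ab tb; lia.
Qed.

Section Patterns.
Variable n : nat.
Implicit Type s : {perm 'I_n}.

Definition has1xx s := exists_lt3 (fun i j k => (s i < s j) && (s i < s k)).
Definition has3421 s :=
  exists_lt4 (fun i j k l => [&& s l < s k, s k < s i & s i < s j]).
Definition av s := ~~ has1xx s && ~~ has3421 s.
Definition inv_after_max s :=
  exists_lt3 (fun j k l => (s j == n.-1 :> nat) && (s l < s k)).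

Lemma av_perm1 : av 1%g = (n <= 2).
Proof.
rewrite /av; have -> : has3421 1%g = false.
  by apply/exists_lt4P => -[i [j [k [l [_ _ kl]]]]]; rewrite !perm1 ltnNge ltnW.
rewrite andbT; case: leqP => [n2 | n2]; first by rewrite /has1xx exists_lt3_small.
apply/negbF/exists_lt3P.
have [o0 o1 o2] : [/\ 0 < n, 1 < n & 2 < n] by split; lia.
by exists (Ordinal o0), (Ordinal o1), (Ordinal o2); rewrite !perm1.
Qed.

End Patterns.

Section FirstEntry.
Variables (n : nat) (t : {perm 'I_n}).
Implicit Type v : 'I_n.+1.

Lemma has1xx_lift0 v : has1xx (lift_perm ord0 v t) = (v < n.-1) || has1xx t.
Proof.
rewrite /has1xx exists_lt3_lift0 -(two_values_geq t v); congr (_ || _).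
  by apply: eq_exists_lt2 => j k _; rewrite lift_perm_id !lift_perm_lift !ltn_pivot_lift.
by apply: eq_exists_lt3 => i j k _ _; rewrite !lift_perm_lift !ltn_lift2.
Qed.

Lemma has3421_lift0 v :
  has3421 (lift_perm ord0 v t) =
  exists_lt3 (fun j k l => [&& t l < t k, t k < v & v <= t j]) || has3421 t.
Proof.
rewrite /has3421 exists_lt4_lift0; congr (_ || _).
  apply: eq_exists_lt3 => j k l _ _.
  by rewrite lift_perm_id !lift_perm_lift ltn_lift2 ltn_lift_pivot ltn_pivot_lift.
by apply: eq_exists_lt4 => i j k l _ _ _; rewrite !lift_perm_lift !ltn_lift2.
Qed.

Lemma inv_after_max_lift0 v :
  inv_after_max (lift_perm ord0 v t) =
  if v == n :> nat then t != 1%g else inv_after_max t.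
Proof.
rewrite /inv_after_max exists_lt3_lift0 -exists_inversion lift_perm_id /=.
case: eqP => [vn | /eqP vn]; last first.
  rewrite (_ : exists_lt2 _ = false) /=; last by apply/exists_lt2P => -[? [? [_]]].
  apply: eq_exists_lt3 => j k l _ _; rewrite !lift_perm_lift ltn_lift2 lift_eq_last.
  by case: eqP => //= ->; have := ltn_ord v; lia.
rewrite (_ : exists_lt3 _ = false) ?orbF.
  by apply: eq_exists_lt2 => k l _; rewrite !lift_perm_lift ltn_lift2.
apply/exists_lt3P => -[j [k [l [_ _]]]]; rewrite lift_perm_lift lift_eq_last vn.
by rewrite leqNgt ltn_ord andbF.
Qed.

Lemma av_lift0_low v : v < n.-1 -> av (lift_perm ord0 v t) = false.
Proof. by move=> vn; rewrite /av has1xx_lift0 vn. Qed.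

Lemma av_lift0_submax v :
  v = n.-1 :> nat -> av (lift_perm ord0 v t) = av t && ~~ inv_after_max t.
Proof.
move=> vn; rewrite /av has1xx_lift0 has3421_lift0 vn ltnn /=.
rewrite (@eq_exists_lt3 _ _ (fun j k l => (t j == n.-1 :> nat) && (t l < t k))).
  by rewrite -/(inv_after_max t) negb_or andbA andbAC.
move=> j k l jk _; have : t j != t k by rewrite (inj_eq perm_inj) neq_ltn jk.
by rewrite -val_eqE /=; have := ltn_ord (t j); have := ltn_ord (t k); lia.
Qed.

Lemma av_lift0_max : av (lift_perm ord0 ord_max t) = av t.
Proof.
rewrite /av has1xx_lift0 has3421_lift0 /= ltnNge leq_pred /=.
rewrite (_ : exists_lt3 _ = false) //.
by apply/exists_lt3P => -[j [k [l [_ _ /and3P[_ _]]]]]; rewrite leqNgt ltn_ord.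
Qed.

End FirstEntry.

Lemma card_perm_lift0 n (P : pred {perm 'I_n.+1}) :
  #|[set s | P s]| = \sum_(v < n.+1) #|[set t : {perm 'I_n} | P (lift_perm ord0 v t)]|.
Proof.
rewrite -sum1_card (partition_big (fun s : {perm 'I_n.+1} => s ord0) xpredT) //=.
apply: eq_bigr => v _; rewrite -sum1_card (reindex (lift_perm ord0 v)) /=; last first.
  (* [del i s] deletes position i and value s i from s, inverting lift_perm i (s i). *)
  pose del i (s : {perm 'I_n.+1}) k := odflt k (unlift (s i) (s (lift i k))).
  have delK i (s : {perm 'I_n.+1}) k : lift (s i) (del i s k) = s (lift i k).
    rewrite /del; have := neq_lift i k.
    by rewrite -(can_eq (permK s)) => /unlift_some[] ? ? ->.
  have del_inj s : injective (del ord0 s).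
    apply: can_inj (del (s ord0) s^-1%g) _ => k.
    by rewrite {1}/del delK !permK liftK.
  exists (fun s => perm (del_inj s)) => [t _ | s].
    by apply/permP => k; rewrite permE /del lift_perm_lift lift_perm_id liftK.
  rewrite inE => /andP[_ /eqP s0]; apply/permP => k.
  case: (unliftP ord0 k) => [k'|] ->; rewrite ?lift_perm_id //.
  by rewrite lift_perm_lift -s0 permE delK.
by apply: eq_bigl => t; rewrite !inE lift_perm_id eqxx andbT.
Qed.

Lemma card_perm_lift0_top2 n (P : pred {perm 'I_n.+2}) :
    (forall (v : 'I_n.+2) t, v < n -> P (lift_perm ord0 v t) = false) ->
  #|[set s | P s]| = #|[set t | P (lift_perm ord0 (inord n) t)]|
                     + #|[set t | P (lift_perm ord0 ord_max t)]|.
Proof.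
move=> P_low; rewrite card_perm_lift0 !big_ord_recr /= big1 ?add0n => [|v _].
  congr (_ + _); apply: eq_card => t; rewrite !inE.
  by congr (P (lift_perm _ _ t)); apply/val_inj; rewrite /= inordK.
apply/eqP; rewrite cards_eq0; apply/eqP/setP => t.
by rewrite !inE P_low //=; exact: ltn_ord.
Qed.

Definition nav n := #|[set s : {perm 'I_n} | av s]|.
Definition nav_incr n := #|[set s : {perm 'I_n} | av s && ~~ inv_after_max s]|.

Lemma nav_rec n : nav n.+2 = nav_incr n.+1 + nav n.+1.
Proof.
rewrite /nav card_perm_lift0_top2 => [|v t vn]; last exact: av_lift0_low.
congr (_ + _); apply: eq_card => t; rewrite !inE.
  by rewrite av_lift0_submax // inordK.
exact: av_lift0_max.
Qed.

Lemma card_av_id n : #|[set t : {perm 'I_n} | av t && (t == 1%g)]| = (n <= 2).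
Proof.
rewrite -av_perm1; case: (boolP (av _)) => av1 /=;
  [rewrite -(cards1 (1%g : {perm 'I_n})) | rewrite -(cards0 {perm 'I_n})];
  apply: eq_card => t; rewrite !inE; case: eqP => [->|]; rewrite ?andbT ?andbF //.
exact: negbTE.
Qed.

Lemma nav_incr_rec n : nav_incr n.+2 = nav_incr n.+1 + (n < 2).
Proof.
rewrite /nav_incr card_perm_lift0_top2 => [|v t vn]; last by rewrite av_lift0_low.
rewrite -card_av_id; congr (_ + _); apply: eq_card => t; rewrite !inE.
  rewrite inv_after_max_lift0 inordK // (ltn_eqF (ltnSn n)).
  by rewrite av_lift0_submax ?inordK // -andbA andbb.
by rewrite av_lift0_max inv_after_max_lift0 /= eqxx negbK.
Qed.

Lemma perm_I1 (s : {perm 'I_1}) : s = 1%g.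
Proof. by apply/permP => i; rewrite !ord1. Qed.

Lemma nav1 : nav 1 = 1.
Proof.
rewrite -[RHS](card_Sn 1); apply: eq_card => s.
by rewrite !inE (perm_I1 s) av_perm1.
Qed.

Lemma nav_incr1 : nav_incr 1 = 1.
Proof.
rewrite -[RHS](card_Sn 1); apply: eq_card => s.
by rewrite !inE (perm_I1 s) av_perm1 /inv_after_max exists_lt3_small.
Qed.

Lemma nav_incr_closed n : nav_incr n.+1 = minn n.+1 3.
Proof. by elim: n => [|n IHn]; rewrite ?nav_incr1 // nav_incr_rec IHn; lia. Qed.

Lemma nav_closed n : nav n.+1 = 3 * n.+1 - 5 + (n < 2).
Proof. by elim: n => [|n IHn]; rewrite ?nav1 // nav_rec nav_incr_closed IHn; lia. Qed.

Section Containment.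
Variables n m : nat.
Implicit Types (s : {perm 'I_n}) (p : {perm 'I_m}).

Lemma containsP s p :
  reflect (exists f : 'I_m -> 'I_n, forall a b : 'I_m,
             (f a < f b) = (a < b) /\ (s (f a) < s (f b)) = (p a < p b))
          (contains s p).
Proof.
apply: (iffP existsP) => [[f /forallP fP] | [f fP]]; last first.
  exists [ffun a => f a]; apply/forallP => a; apply/forallP => b.
  by apply/implyP => ab; rewrite !ffunE; have [-> ->] := fP a b; rewrite ab eqxx.
have f_lt (a b : 'I_m) : a < b -> (f a < f b) && ((s (f a) < s (f b)) == (p a < p b)).
  by move=> ab; exact: implyP (forallP (fP a) b) ab.
exists f => a b; case: (ltngtP a b) => [ab | ba | /val_inj ->]; last by rewrite !ltnn.
  by case/andP: (f_lt a b ab) => -> /eqP.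
case/andP: (f_lt b a ba) => fba /eqP sfba; split; first by rewrite ltnNge ltnW.
have neq_ba : b != a by apply/eqP => eq_ba; rewrite eq_ba ltnn in ba.
have neq_fba : f b != f a by apply/eqP => eq_fba; rewrite eq_fba ltnn in fba.
by rewrite perm_ltnNgt // sfba -perm_ltnNgt.
Qed.

End Containment.

Section ReverseComplement.
Variable n : nat.
Implicit Type s : {perm 'I_n}.

Lemma rc_inj s : injective (fun i => rev_ord (s (rev_ord i))).
Proof. by move=> i j /rev_ord_inj/perm_inj/rev_ord_inj. Qed.

Definition rc s : {perm 'I_n} := perm (@rc_inj s).
Definition rci s := rc s^-1%g.

Lemma rcE s i : rc s i = rev_ord (s (rev_ord i)).
Proof. exact: permE. Qed.

Lemma rcK : involutive rc.
Proof. by move=> s; apply/permP => i; rewrite !rcE !rev_ordK. Qed.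

Lemma rcV s : ((rc s)^-1 = rc s^-1)%g.
Proof.
apply/permP => i; apply: (@perm_inj _ (rc s)).
by rewrite permKV !rcE rev_ordK permKV rev_ordK.
Qed.

Lemma rciK : involutive rci.
Proof. by move=> s; rewrite /rci rcV invgK rcK. Qed.

Lemma rci_eq s (t : {perm 'I_n}) :
  (forall i, s (rev_ord (t i)) = rev_ord i :> nat) -> rci s = t.
Proof.
move=> st; apply/permP => i.
by rewrite rcE -(val_inj (st i)) permK rev_ordK.
Qed.

End ReverseComplement.

Section ContainmentSymmetry.
Variables n m : nat.
Implicit Types (s : {perm 'I_n}) (p : {perm 'I_m}).

Lemma contains_rc s p : contains s p -> contains (rc s) (rc p).
Proof.
case/containsP => f fP; apply/containsP.
exists (fun a => rev_ord (f (rev_ord a))) => a b.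
have [lt_f lt_sf] := fP (rev_ord b) (rev_ord a).
by split; rewrite ?rcE ?rev_ordK !ltn_rev_ord ?lt_f ?lt_sf ?ltn_rev_ord.
Qed.

Lemma contains_inv s p : contains s p -> contains s^-1%g p^-1%g.
Proof.
case/containsP => f fP; apply/containsP.
exists (fun a => s (f (p^-1%g a))) => a b.
have [lt_f lt_sf] := fP (p^-1%g a) (p^-1%g b).
by rewrite !permK lt_sf !permKV lt_f.
Qed.

Lemma contains_rci s p : contains (rci s) (rci p) = contains s p.
Proof.
apply/idP/idP => [|/contains_inv/contains_rc //].
by move/contains_inv/contains_rc; rewrite !rcV !invgK !rcK.
Qed.

End ContainmentSymmetry.

Lemma Av3_rci n (t1 t2 : {perm 'I_3}) (t3 : {perm 'I_4}) :
  Av3 n (rci t1) (rci t2) (rci t3) = (@rci n) @^-1: Av3 n t1 t2 t3.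
Proof.
by apply/setP => s; rewrite !inE /avoids -{1 2 3}(rciK s) !contains_rci.
Qed.

Lemma ord3P (a : 'I_3) : [\/ a = inord 0, a = inord 1 | a = inord 2].
Proof.
by case: a => [[|[|[|//]]] ?]; [apply: Or31 | apply: Or32 | apply: Or33];
  apply/val_inj; rewrite /= inordK.
Qed.

Lemma ord4P (a : 'I_4) : [\/ a = inord 0, a = inord 1, a = inord 2 | a = inord 3].
Proof.
by case: a => [[|[|[|[|//]]]] ?]; [apply: Or41 | apply: Or42 | apply: Or43 | apply: Or44];
  apply/val_inj; rewrite /= inordK.
Qed.

Section SmallPatterns.
Variable n : nat.
Implicit Type s : {perm 'I_n}.

Lemma contains3E s (p : {perm 'I_3}) :
  contains s p = exists_lt3 (fun i j k =>
    [&& (s i < s j) == (p (inord 0) < p (inord 1)),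
        (s i < s k) == (p (inord 0) < p (inord 2))
      & (s j < s k) == (p (inord 1) < p (inord 2))]).
Proof.
apply/idP/exists_lt3P => [/containsP[f fP] | [i [j [k [ij jk /and3P[e01 e02 e12]]]]]].
  exists (f (inord 0)), (f (inord 1)), (f (inord 2)).
  by rewrite !(proj1 (fP _ _)) !(proj2 (fP _ _)) !inordK // !eqxx.
apply/existsP; exists [ffun a : 'I_3 => nth i [:: i; j; k] a].
apply/forallP => a; apply/forallP => b; apply/implyP.
by case: (ord3P a) => ->; case: (ord3P b) => ->;
  rewrite !ffunE !inordK //= ?ij ?jk ?(ltn_trans ij jk).
Qed.

Lemma contains4E s (p : {perm 'I_4}) :
  contains s p = exists_lt4 (fun i j k l =>
    [&& (s i < s j) == (p (inord 0) < p (inord 1)),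
        (s i < s k) == (p (inord 0) < p (inord 2)),
        (s i < s l) == (p (inord 0) < p (inord 3)),
        (s j < s k) == (p (inord 1) < p (inord 2)),
        (s j < s l) == (p (inord 1) < p (inord 3))
      & (s k < s l) == (p (inord 2) < p (inord 3))]).
Proof.
apply/idP/exists_lt4P => [/containsP[f fP] | [i [j [k [l [ij jk kl]]]]]].
  exists (f (inord 0)), (f (inord 1)), (f (inord 2)), (f (inord 3)).
  by rewrite !(proj1 (fP _ _)) !(proj2 (fP _ _)) !inordK // !eqxx.
case/and5P => e01 e02 e03 e12 /andP[e13 e23].
apply/existsP; exists [ffun a : 'I_4 => nth i [:: i; j; k; l] a].
apply/forallP => a; apply/forallP => b; apply/implyP.
have [ik jl] := (ltn_trans ij jk, ltn_trans jk kl).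
by case: (ord4P a) => ->; case: (ord4P b) => ->;
  rewrite !ffunE !inordK //= ?ij ?jk ?kl ?ik ?jl ?(ltn_trans ij jl).
Qed.

End SmallPatterns.

Lemma p132E (a : 'I_3) : p132 a = nth 0 [:: 0; 2; 1] a :> nat.
Proof. by case: (ord3P a) => ->; rewrite permE /= -!val_eqE /= !inordK. Qed.

Lemma p213E (a : 'I_3) : p213 a = nth 0 [:: 1; 0; 2] a :> nat.
Proof. by case: (ord3P a) => ->; rewrite permE /= -!val_eqE /= !inordK. Qed.

Lemma p3421E (a : 'I_4) : p3421 a = nth 0 [:: 2; 3; 1; 0] a :> nat.
Proof. by rewrite permE /f3421 inordK //; case: a => [[|[|[|[|//]]]] ?]. Qed.

Lemma rci_p123 : rci p123 = p123.
Proof. by apply: rci_eq => a; rewrite /p123 !perm1. Qed.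

Lemma rci_p132 : rci p132 = p213.
Proof. by apply: rci_eq => a; rewrite p132E /= p213E; case: a => [[|[|[|//]]] ?]. Qed.

Lemma rci_p3421 : rci p3421 = p3421.
Proof. by apply: rci_eq => a; rewrite p3421E /= p3421E; case: a => [[|[|[|[|//]]]] ?]. Qed.

Lemma contains_123_or_132 n (s : {perm 'I_n}) :
  contains s p123 || contains s p132 = has1xx s.
Proof.
rewrite !contains3E exists_lt3_orb; apply: eq_exists_lt3 => i j k _ _.
rewrite /p123 !perm1 !p132E !inordK //=.
by case: (s i < s j); case: (s i < s k); case: (s j < s k).
Qed.

Lemma contains_3421 n (s : {perm 'I_n}) : contains s p3421 = has3421 s.
Proof.
rewrite contains4E; apply: eq_exists_lt4 => i j k l ij jk kl.
have [ik jl] := (ltn_trans ij jk, ltn_trans jk kl); have il := ltn_trans ik kl.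
have gtE (a b : 'I_n) : a < b -> ~~ (s a < s b) = (s b < s a).
  by move=> ab; rewrite -perm_ltnNgt // -val_eqE neq_ltn ab.
rewrite !p3421E !inordK //= eqb_id !eqbF_neg !gtE //.
apply/idP/and3P => [/and5P[-> -> _ _ /andP[_ ->]] // | [lk ki ij']].
have li := ltn_trans lk ki.
by rewrite ij' ki lk li (ltn_trans ki ij') (ltn_trans li ij').
Qed.

Lemma Av3_123_132_3421 n : Av3 n p123 p132 p3421 = [set s | av s].
Proof.
apply/setP => s; rewrite !inE /avoids /av -contains_123_or_132 -contains_3421.
by rewrite negb_or andbA.
Qed.

Lemma card_av n : 3 <= n -> nav n = 3 * n - 5.
Proof. by case: n => // n n3; rewrite nav_closed; lia. Qed.

Unset Implicit Arguments.

Theorem theorem3p5 (n : nat) : 3 <= n ->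
  #|Av3 n p123 p132 p3421| = 3 * n - 5 /\ #|Av3 n p123 p213 p3421| = 3 * n - 5.
Proof.
move=> n3; have class1 : #|Av3 n p123 p132 p3421| = 3 * n - 5.
  by rewrite Av3_123_132_3421; exact: card_av.
split=> //; rewrite -rci_p123 -rci_p132 -rci_p3421 Av3_rci card_preimset //.
exact: can_inj (@rciK n).
Qed.
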